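(* Let $A\in\mathbb{R}^{m\times n}$ with $m\ge n$ and with nonzero rows $a_1^\top,\dots,a_m^\top$, let $x\in\mathbb{R}^n$ and $b:=Ax$. Fix $\beta\in[0,1)$, $M\in[0,1]$ and $l\in\{1,\dots,n\}$; let $\sigma_l$ be the $l$-th largest singular value of $A$ and $v_l$ an associated right singular vector. Given $x_0\in\mathbb{R}^n$ and $y_0=0$, define for $k\ge0$ $$x_{k+1}=x_k+\frac{b_{i_k}-\langle x_k,a_{i_k}\rangle}{\|a_{i_k}\|_2^2}a_{i_k}+My_k,\qquad y_{k+1}=\beta y_k+(1-\beta)(x_{k+1}-x_k),$$ with $i_0,i_1,\dots$ independent and $\mathbb{P}(i_k=i)=\|a_i\|_2^2/\|A\|_F^2$. Let $r:=1-\sigma_l^2/\|A\|_F^2+M(1-\beta)$, $\zeta:=M(1-\beta)^2$, and $$\lambda_1:=\frac{r+\beta+\sqrt{(r-\beta)^2-4\zeta}}{2}.$$ Suppose $\lambda_1$ is complex with nonzero imaginary part, i.e. $\lambda_1=\rho e^{i\theta}$ with $\rho>0$ and $0<\theta<\pi$. Then there exist constants $C$ and $\theta_0$, depending on $r,\zeta,\beta,v_l,x,x_0$, such that for all $k\ge0$, $$\mathbb{E}\langle x_{k+1}-x,v_l\rangle=C\rho^k\cos(k\theta+\theta_0).$$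
   Context: $\|\cdot\|_2$ is the Euclidean norm, $\|A\|_F$ the Frobenius norm, $b_i$ the $i$-th entry of $b$; expectation is over the random indices. When $(r-\beta)^2-4\zeta<0$ the square root is $i\sqrt{4\zeta-(r-\beta)^2}$. *)

From HB Require Import structures.
From mathcomp Require Import all_boot all_order all_algebra.
From mathcomp Require Import all_classical all_reals all_analysis.
Set Implicit Arguments. Unset Strict Implicit. Unset Printing Implicit Defensive.
Import Order.TTheory GRing.Theory Num.Theory.
Local Open Scope ring_scope.

Section Defs.
Variables (R : realType) (m n : nat).

Definition dotv (u w : 'cV[R]_n) : R := \sum_(j < n) u j 0 * w j 0.

Definition arow (A : 'M[R]_(m, n)) (i : 'I_m) : 'cV[R]_n := (row i A)^T.

Definition frob2 (A : 'M[R]_(m, n)) : R := \sum_(i < m) \sum_(j < n) A i j ^+ 2.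

Definition rowprob (A : 'M[R]_(m, n)) (i : 'I_m) : R :=
  dotv (arow A i) (arow A i) / frob2 A.

Definition singular_values_desc (A : 'M[R]_(m, n)) (s : 'I_n -> R) : Prop :=
  (forall j, 0 <= s j) /\
  (forall j k : 'I_n, (j <= k)%N -> s k <= s j) /\
  exists V : 'M[R]_n, V^T *m V = 1%:M /\
    A^T *m A = V *m diag_mx (\row_j (s j ^+ 2)) *m V^T.

Definition right_singular_vector (A : 'M[R]_(m, n)) (sigma : R) (v : 'cV[R]_n) :=
  v != 0 /\ A^T *m A *m v = (sigma ^+ 2) *: v.

Definition mrk_step (A : 'M[R]_(m, n)) (b : 'cV[R]_m) (beta M : R)
  (st : 'cV[R]_n * 'cV[R]_n) (i : 'I_m) : 'cV[R]_n * 'cV[R]_n :=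
  let: (xk, yk) := st in
  let a := arow A i in
  let x' := xk + ((b i 0 - dotv xk a) / dotv a a) *: a + M *: yk in
  (x', beta *: yk + (1 - beta) *: (x' - xk)).

Definition mrk_run (A : 'M[R]_(m, n)) (b : 'cV[R]_m) (beta M : R)
  (x0 : 'cV[R]_n) (s : seq 'I_m) : 'cV[R]_n * 'cV[R]_n :=
  foldl (mrk_step A b beta M) (x0, 0) s.

(* x_{k+1} for the index realization t = (i_0, ..., i_k) *)
Definition mrk_x (A : 'M[R]_(m, n)) (b : 'cV[R]_m) (beta M : R)
  (x0 : 'cV[R]_n) (k : nat) (t : {ffun 'I_k.+1 -> 'I_m}) : 'cV[R]_n :=
  (mrk_run A b beta M x0 [seq t j | j <- enum 'I_k.+1]).1.

(* E<x_{k+1} - x, v>, the expectation over the independent indices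
   i_0, ..., i_k with P(i_j = i) = rowprob A i *)
Definition mrk_expect (A : 'M[R]_(m, n)) (b : 'cV[R]_m) (beta M : R)
  (x0 x v : 'cV[R]_n) (k : nat) : R :=
  \sum_(t : {ffun 'I_k.+1 -> 'I_m})
     (\prod_(j < k.+1) rowprob A (t j)) * dotv (mrk_x A b beta M x0 t - x) v.

End Defs.

From HB Require Import structures.
From mathcomp Require Import all_boot all_order all_algebra.
From mathcomp Require Import all_classical all_reals all_analysis.
From mathcomp Require Import ring lra.
Import Order.TTheory GRing.Theory Num.Theory.
Set Implicit Arguments. Unset Strict Implicit. Unset Printing Implicit Defensive.
Local Open Scope ring_scope.

(* Given the past, the next row is drawn with probability |a_i|^2 / |A|_F^2,
   so the mean of the Kaczmarz projection a_i a_i^T / |a_i|^2 is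
   A^T A / |A|_F^2, which acts on the right singular vector v as the scalar
   sigma_l^2 / |A|_F^2.  Hence e_k := E<x_k - x, v> and f_k := E<y_k, v> obey a
   deterministic 2x2 linear recursion, and by Cayley-Hamilton e_k satisfies the
   second-order recurrence whose characteristic polynomial
   X^2 - (r + beta) X + (r beta + zeta) has the roots rho e^{+-i theta}.  The
   sequence C rho^k cos(k theta + theta0) satisfies the same recurrence, and
   C, theta0 can be chosen to match its first two terms. *)

Section DotProduct.
Variables (R : realType) (n : nat).
Implicit Types u w : 'cV[R]_n.

Lemma dotvE u w : dotv u w = (u^T *m w) 0 0.
Proof. by rewrite /dotv mxE; apply: eq_bigr => j _; rewrite mxE. Qed.

Lemma dotvC u w : dotv u w = dotv w u.
Proof. by apply: eq_bigr => j _; rewrite mulrC. Qed.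

Lemma dotvDl u1 u2 w : dotv (u1 + u2) w = dotv u1 w + dotv u2 w.
Proof. by rewrite /dotv -big_split; apply: eq_bigr => j _; rewrite mxE mulrDl. Qed.

Lemma dotvBl u1 u2 w : dotv (u1 - u2) w = dotv u1 w - dotv u2 w.
Proof. by rewrite /dotv -sumrB; apply: eq_bigr => j _; rewrite !mxE mulrBl. Qed.

Lemma dotvZl a u w : dotv (a *: u) w = a * dotv u w.
Proof. by rewrite /dotv mulr_sumr; apply: eq_bigr => j _; rewrite mxE mulrA. Qed.

Lemma dotvZr a u w : dotv u (a *: w) = a * dotv u w.
Proof. by rewrite dotvC dotvZl dotvC. Qed.

Lemma dotv_ge0 u : 0 <= dotv u u.
Proof. by apply: sumr_ge0 => j _; rewrite -expr2 sqr_ge0. Qed.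

Lemma dotv_eq0 u : (dotv u u == 0) = (u == 0).
Proof.
apply/eqP/eqP => [u0|->]; last by rewrite /dotv big1 // => j _; rewrite mxE mul0r.
apply/matrixP => j k; rewrite ord1 mxE.
apply/eqP; rewrite -[_ == 0]orbb -mulf_eq0; apply/eqP.
by apply: (psumr_eq0P _ u0) => // i _; rewrite -expr2 sqr_ge0.
Qed.

End DotProduct.

Section RowSampling.
Variables (R : realType) (m n : nat).
Implicit Types (u w : 'cV[R]_n) (A : 'M[R]_(m, n)).

Lemma dotv_arowl A i w : dotv (arow A i) w = (A *m w) i 0.
Proof. by rewrite mxE; apply: eq_bigr => j _; rewrite !mxE. Qed.

Lemma sum_dotv_arow A u w :
  \sum_i dotv u (arow A i) * dotv (arow A i) w = dotv u (A^T *m A *m w).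
Proof.
transitivity (dotv (A *m u) (A *m w)).
  by apply: eq_bigr => i _; rewrite dotvC !dotv_arowl.
by rewrite !dotvE trmx_mul !mulmxA.
Qed.

Lemma frob2_sum_dotv A : frob2 A = \sum_i dotv (arow A i) (arow A i).
Proof. by apply: eq_bigr => i _; apply: eq_bigr => j _; rewrite !mxE expr2. Qed.

Lemma frob2_gt0 A : (0 < m)%N -> (forall i, row i A != 0) -> 0 < frob2 A.
Proof.
move=> m_gt0 nzA; rewrite frob2_sum_dotv lt_def.
rewrite psumr_neq0 => [|i _]; last exact: dotv_ge0.
rewrite sumr_ge0 ?andbT => [|i _]; last exact: dotv_ge0.
apply/hasP; exists (Ordinal m_gt0); first by rewrite mem_index_enum.
by rewrite /= lt_def dotv_eq0 /arow trmx_eq0 nzA dotv_ge0.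
Qed.

Lemma sum_rowprob A : frob2 A != 0 -> \sum_i rowprob A i = 1.
Proof. by move=> nzF; rewrite -mulr_suml -frob2_sum_dotv divff. Qed.

End RowSampling.

Section IteratedMean.
Variables (R : comPzRingType) (T : Type) (I : finType).
Variables (p : I -> R) (step : T -> I -> T).

Fixpoint iter_mean (k : nat) (st : T) (phi : T -> R) : R :=
  if k is k'.+1 then \sum_i p i * iter_mean k' (step st i) phi else phi st.

Lemma iter_meanE k st phi :
  \sum_(t : {ffun 'I_k -> I})
     (\prod_(j < k) p (t j)) * phi (foldl step st [seq t j | j <- enum 'I_k])
  = iter_mean k st phi.
Proof.
elim: k st => [|k IHk] st.
  rewrite (eq_bigr (fun _ => phi st)) => [|t _]; last by rewrite big_ord0 mul1r enum_ord0.
  by rewrite sumr_const card_ffun !card_ord.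
pose cons_ff (u : I * {ffun 'I_k -> I}) : {ffun 'I_k.+1 -> I} :=
  [ffun j => if unlift ord0 j is Some j' then u.2 j' else u.1].
have cons_ff0 i t : cons_ff (i, t) ord0 = i by rewrite ffunE unlift_none.
have cons_ffS i t j : cons_ff (i, t) (lift ord0 j) = t j by rewrite ffunE liftK.
pose F (t : {ffun 'I_k.+1 -> I}) :=
  (\prod_(j < k.+1) p (t j)) * phi (foldl step st [seq t j | j <- enum 'I_k.+1]).
change (\sum_t F t = \sum_i p i * iter_mean k (step st i) phi).
rewrite (reindex cons_ff); last first.
  exists (fun t : {ffun 'I_k.+1 -> I} => (t ord0, [ffun j => t (lift ord0 j)]))
    => [[i t] _ | t _].
    by rewrite cons_ff0; congr pair; apply/ffunP => j; rewrite ffunE cons_ffS.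
  by apply/ffunP => j; rewrite ffunE; case: unliftP => [j' ->|->]; rewrite ?ffunE.
rewrite (eq_bigr (fun u => F (cons_ff (u.1, u.2)))) => [|[] //].
rewrite -(pair_bigA _ (fun i t => F (cons_ff (i, t)))); apply: eq_bigr => i _.
rewrite -IHk mulr_sumr; apply: eq_bigr => t _.
rewrite /F big_ord_recl enum_ordSl /= -map_comp cons_ff0 mulrA.
rewrite (eq_bigr (fun j => p (t j))) => [|j _]; last by rewrite cons_ffS.
by rewrite (eq_map (g := fun j => t j)) // => j; rewrite /= cons_ffS.
Qed.

Lemma eq_iter_mean k st phi psi :
  phi =1 psi -> iter_mean k st phi = iter_mean k st psi.
Proof.
move=> eq_phi; elim: k st => [|k IHk] st /=; first exact: eq_phi.
by apply: eq_bigr => i _; rewrite IHk.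
Qed.

Lemma iter_mean_lin k st a c phi psi :
  iter_mean k st (fun s => a * phi s + c * psi s)
  = a * iter_mean k st phi + c * iter_mean k st psi.
Proof.
elim: k st => [|k IHk] st //=.
rewrite !mulr_sumr -big_split; apply: eq_bigr => i _ /=; rewrite IHk; ring.
Qed.

Lemma iter_meanSr k st phi :
  iter_mean k.+1 st phi = iter_mean k st (fun s => \sum_i p i * phi (step s i)).
Proof.
elim: k st => [|k IHk] st //.
transitivity (\sum_i p i * iter_mean k.+1 (step st i) phi) => //.
by apply: eq_bigr => i _; rewrite IHk.
Qed.

End IteratedMean.

Section MomentumStep.
Variables (R : realType) (m n : nat) (A : 'M[R]_(m, n)).
Variables (x v : 'cV[R]_n) (beta M sigma2 : R).
Hypotheses (nzA : forall i, row i A != 0) (nzF : frob2 A != 0).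
Hypothesis eigen_v : A^T *m A *m v = sigma2 *: v.

Local Notation step := (mrk_step A (A *m x) beta M).

Lemma mean_rowprob (c : R) : \sum_i rowprob A i * c = c.
Proof. by rewrite -mulr_suml sum_rowprob // mul1r. Qed.

Lemma mrk_step_err xk yk i (a := arow A i) :
  (step (xk, yk) i).1 - x = (xk - x) - (dotv (xk - x) a / dotv a a) *: a + M *: yk.
Proof.
rewrite /= -/a; have -> : (A *m x) i 0 = dotv x a by rewrite dotvC dotv_arowl.
by rewrite dotvBl -scaleNr -mulNr opprB addrAC (addrAC xk).
Qed.

Lemma mean_step_err xk yk :
  \sum_i rowprob A i * dotv ((step (xk, yk) i).1 - x) v
  = (1 - sigma2 / frob2 A) * dotv (xk - x) v + M * dotv yk v.
Proof.
have weight i : rowprob A i * (dotv (xk - x) (arow A i)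
      / dotv (arow A i) (arow A i) * dotv (arow A i) v)
    = dotv (xk - x) (arow A i) * dotv (arow A i) v / frob2 A.
  have nz_a : dotv (arow A i) (arow A i) != 0 by rewrite dotv_eq0 /arow trmx_eq0.
  by rewrite /rowprob; field; rewrite nz_a nzF.
under eq_bigr => i _ do
  rewrite mrk_step_err dotvDl (dotvBl (xk - x)) !dotvZl mulrDr mulrBr.
rewrite !big_split sumrN /= !mean_rowprob (eq_bigr _ (fun i _ => weight i)).
by rewrite -mulr_suml sum_dotv_arow eigen_v dotvZr; field.
Qed.

Lemma mean_step_mom xk yk :
  \sum_i rowprob A i * dotv (step (xk, yk) i).2 v
  = (1 - beta) * - (sigma2 / frob2 A) * dotv (xk - x) v
    + (beta + (1 - beta) * M) * dotv yk v.
Proof.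
have split_mom i : rowprob A i * dotv (step (xk, yk) i).2 v
    = rowprob A i * (beta * dotv yk v)
      + (1 - beta) * (rowprob A i * dotv ((step (xk, yk) i).1 - x) v)
      - (1 - beta) * (rowprob A i * dotv (xk - x) v).
  have -> : (step (xk, yk) i).2
      = beta *: yk + (1 - beta) *: (((step (xk, yk) i).1 - x) - (xk - x)).
    by rewrite /= opprB addrA addrNK.
  by rewrite (dotvDl (beta *: yk)) !dotvZl (dotvBl (_ - x)); ring.
rewrite (eq_bigr _ (fun i _ => split_mom i)) !big_split sumrN /= -!mulr_sumr.
by rewrite !mean_rowprob mean_step_err; ring.
Qed.

Local Notation mean := (iter_mean (rowprob A) step).
Local Notation err := (fun st : 'cV[R]_n * 'cV[R]_n => dotv (st.1 - x) v).
Local Notation mom := (fun st : 'cV[R]_n * 'cV[R]_n => dotv st.2 v).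

Lemma mrk_expectE x0 k :
  mrk_expect A (A *m x) beta M x0 x v k = mean k.+1 (x0, 0) err.
Proof. exact: iter_meanE. Qed.

Lemma mean_errS k st :
  mean k.+1 st err = (1 - sigma2 / frob2 A) * mean k st err + M * mean k st mom.
Proof.
rewrite iter_meanSr -iter_mean_lin.
by apply: eq_iter_mean => -[xk yk]; apply: mean_step_err.
Qed.

Lemma mean_momS k st :
  mean k.+1 st mom = (1 - beta) * - (sigma2 / frob2 A) * mean k st err
                     + (beta + (1 - beta) * M) * mean k st mom.
Proof.
rewrite iter_meanSr -iter_mean_lin.
by apply: eq_iter_mean => -[xk yk]; apply: mean_step_mom.
Qed.

End MomentumStep.

Lemma coupled_recurrence2 (R : comPzRingType) (a b c d : R) (e f : nat -> R) :
  (forall k, e k.+1 = a * e k + b * f k) ->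
  (forall k, f k.+1 = c * e k + d * f k) ->
  forall k, e k.+2 = (a + d) * e k.+1 - (a * d - b * c) * e k.
Proof. by move=> he hf k; rewrite (he k.+1) hf he; ring. Qed.

Lemma recurrence2_eq (R : pzRingType) (a c : R) (g h : nat -> R) :
  (forall k, g k.+2 = a * g k.+1 - c * g k) ->
  (forall k, h k.+2 = a * h k.+1 - c * h k) ->
  g 0%N = h 0%N -> g 1%N = h 1%N -> g =1 h.
Proof.
move=> hg hh g0 g1 k.
suff: g k = h k /\ g k.+1 = h k.+1 by case.
by elim: k => [|k [IHk IHk1]] //; rewrite hg hh IHk IHk1.
Qed.

Section Trigonometry.
Variable R : realType.

Lemma polar_form (a c : R) : exists C t : R, C * cos t = a /\ C * sin t = c.
Proof.
set C := Num.sqrt (a ^+ 2 + c ^+ 2).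
have C2 : C ^+ 2 = a ^+ 2 + c ^+ 2 by rewrite sqr_sqrtr // addr_ge0 // sqr_ge0.
have [C0|nzC] := eqVneq C 0.
  have /eqP : a ^+ 2 = 0 by move: C2; rewrite C0; nra.
  have /eqP : c ^+ 2 = 0 by move: C2; rewrite C0; nra.
  by rewrite !sqrf_eq0 => /eqP-> /eqP->; exists 0, 0; rewrite !mul0r.
have C_gt0 : 0 < C by rewrite lt_def nzC sqrtr_ge0.
have y_bound : -1 <= a / C <= 1.
  by rewrite ler_pdivlMr // ler_pdivrMr // mulN1r mul1r; apply/andP; split; nra.
have [_ cos_acos] := acos_def y_bound.
have C_sin_acos : C * sin (acos (a / C)) = `|c|.
  have C_sqrt : C = Num.sqrt (C ^+ 2) by rewrite sqrtr_sqr ger0_norm // ltW.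
  rewrite sin_acos // {1}C_sqrt -sqrtrM ?sqr_ge0 // -sqrtr_sqr; congr Num.sqrt.
  by rewrite mulrBr mulr1 expr_div_n mulrC divfK ?sqrf_eq0 // C2; ring.
have [c_ge0|c_lt0] := leP 0 c.
  exists C, (acos (a / C)); rewrite cos_acos C_sin_acos ger0_norm //.
  by split=> //; rewrite mulrCA divff // mulr1.
exists C, (- acos (a / C)); rewrite cosN sinN mulrN cos_acos C_sin_acos ltr0_norm //.
by rewrite opprK mulrCA divff // mulr1.
Qed.

Lemma cosD_addr_cosB (s t : R) : cos (s + t) + cos (s - t) = 2 * cos t * cos s.
Proof. by rewrite cosD cosB; ring. Qed.

Lemma recurrence2_cos (rho theta : R) (g : nat -> R) :
  rho != 0 -> sin theta != 0 ->
  (forall k, g k.+2 = 2 * rho * cos theta * g k.+1 - rho ^+ 2 * g k) ->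
  exists C theta0, forall k, g k = C * rho ^+ k * cos (k%:R * theta + theta0).
Proof.
move=> nz_rho nz_sin hg.
have [C [t0 [C_cos C_sin]]] :=
  polar_form (g 0%N) ((g 0%N * cos theta - g 1%N / rho) / sin theta).
exists C, t0; apply: recurrence2_eq hg _ _ _ => [k||].
- set t := k.+1%:R * theta + t0.
  have -> : k.+2%:R * theta + t0 = t + theta by rewrite /t -addn1 natrD; ring.
  have -> : k%:R * theta + t0 = t - theta by rewrite /t -addn1 natrD; ring.
  have -> : cos (t + theta) = 2 * cos theta * cos t - cos (t - theta).
    by rewrite -cosD_addr_cosB addrK.
  by rewrite !exprS; ring.
- by rewrite mul0r add0r expr0 mulr1 C_cos.
- have -> : C * rho ^+ 1 * cos (1 * theta + t0)
      = rho * (cos theta * (C * cos t0) - sin theta * (C * sin t0)).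
    by rewrite mul1r expr1 cosD; ring.
  by rewrite C_cos C_sin; field; rewrite nz_rho nz_sin.
Qed.

End Trigonometry.

Theorem corollary1p5 (R : realType) (m n : nat) (A : 'M[R]_(m, n))
  (hmn : (n <= m)%N) (hrows : forall i : 'I_m, row i A != 0)
  (x : 'cV[R]_n) (beta M : R)
  (hbeta : 0 <= beta < 1) (hM : 0 <= M <= 1)
  (s : 'I_n -> R) (hs : singular_values_desc A s)
  (l : 'I_n) (v : 'cV[R]_n) (hv : right_singular_vector A (s l) v)
  (x0 : 'cV[R]_n) (rho theta : R) :
  let b := A *m x in
  let r := 1 - s l ^+ 2 / frob2 A + M * (1 - beta) in
  let zeta := M * (1 - beta) ^+ 2 in
  (r - beta) ^+ 2 - 4 * zeta < 0 ->
  0 < rho -> 0 < theta < pi ->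
  rho * cos theta = (r + beta) / 2 ->
  rho * sin theta = Num.sqrt (4 * zeta - (r - beta) ^+ 2) / 2 ->
  exists C theta0 : R, forall k : nat,
    mrk_expect A b beta M x0 x v k
      = C * rho ^+ k * cos (k%:R * theta + theta0).
Proof.
move=> b r zeta disc_lt0 rho_gt0 theta_in rho_cos rho_sin.
have m_gt0 : (0 < m)%N := leq_trans (ltn0Sn l) (leq_trans (ltn_ord l) hmn).
have nzF : frob2 A != 0 by rewrite gt_eqF // frob2_gt0.
have [_ eigen_v] := hv.
pose e k := iter_mean (rowprob A) (mrk_step A b beta M) k (x0, 0)
  (fun st => dotv (st.1 - x) v).
pose f k := iter_mean (rowprob A) (mrk_step A b beta M) k (x0, 0)
  (fun st => dotv st.2 v).
have rec_e := @coupled_recurrence2 _ _ _ _ _ e f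
  (fun k => mean_errS x beta M hrows nzF eigen_v k (x0, 0))
  (fun k => mean_momS x beta M hrows nzF eigen_v k (x0, 0)).
have rho2 : rho ^+ 2 = r * beta + zeta.
  have disc_ge0 : 0 <= 4 * zeta - (r - beta) ^+ 2 by lra.
  have -> : rho ^+ 2 = (rho * cos theta) ^+ 2 + (rho * sin theta) ^+ 2.
    by rewrite -[LHS]mulr1 -(cos2Dsin2 theta); ring.
  by rewrite rho_cos rho_sin !expr_div_n sqr_sqrtr //; field.
have [C [theta0 eC]] : exists C theta0, forall k,
    e k.+1 = C * rho ^+ k * cos (k%:R * theta + theta0).
  apply: recurrence2_cos => [||k]; [exact: lt0r_neq0 | exact/lt0r_neq0/sin_gt0_pi |].
  rewrite rec_e; congr (_ * _ - _ * _); last by rewrite rho2 /r /zeta; ring.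
  by rewrite -mulrA rho_cos /r; field.
by exists C, theta0 => k; rewrite -eC mrk_expectE.
Qed.
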